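(* Let $\mathcal X=\{1,\dots,N\}$ with $N\ge 2$, let $0<\alpha<1$ and $0\le\varepsilon\le 1-\frac1N$. Let $p,q$ be probability distributions on $\mathcal X$ with $p(x)>0$ for all $x\in\mathcal X$, and let $y\in\mathcal X$. Put $p_0'=U_{\alpha,0}(p,y)$ and $p_\varepsilon'=U_{\alpha,\varepsilon}(p,y)$. Then \[ D(q\parallel p_0')\;\ge\; D(q\parallel p_\varepsilon')-\log\frac1{1-\varepsilon}. \]
   Context: All logarithms are natural. For a distribution $p$ on $\mathcal X$, a letter $y\in\mathcal X$, $0<\alpha<1$ and $0\le\varepsilon\le 1-\frac1N$, the update $U_{\alpha,\varepsilon}(p,y)$ is the distribution $p'$ with $p'(x)=\alpha p(x)+(1-\alpha)(1-\varepsilon)$ if $x=y$ and $p'(x)=\alpha p(x)+(1-\alpha)\frac{\varepsilon}{N-1}$ if $x\ne y$. For distributions $q,r$ on $\mathcal X$ with $r(x)>0$ for all $x$, the KL divergence is $D(q\parallel r)=\sum_{x:\,q(x)>0} q(x)\log\frac{q(x)}{r(x)}$. *)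

From mathcomp Require Import all_boot all_order all_algebra.
From mathcomp Require Import all_classical all_reals all_analysis.
Set Implicit Arguments. Unset Strict Implicit. Unset Printing Implicit Defensive.
Import Order.TTheory GRing.Theory Num.Theory.
Local Open Scope ring_scope.

(* The alphabet X = {1,...,N} is represented by 'I_N. *)
Definition is_distr (R : realType) (N : nat) (p : 'I_N -> R) : Prop :=
  (forall x, 0 <= p x) /\ \sum_(x < N) p x = 1.

Definition update (R : realType) (N : nat) (alpha eps : R) (p : 'I_N -> R)
  (y : 'I_N) : 'I_N -> R :=
  fun x => if x == y then alpha * p x + (1 - alpha) * (1 - eps)
           else alpha * p x + (1 - alpha) * (eps / (N%:R - 1)).

Definition KL (R : realType) (N : nat) (q r : 'I_N -> R) : R :=
  \sum_(x < N | 0 < q x) q x * ln (q x / r x).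

From mathcomp Require Import all_boot all_order all_algebra.
From mathcomp Require Import all_classical all_reals all_analysis.
From mathcomp Require Import lra.
Import Order.TTheory GRing.Theory Num.Theory.
Local Open Scope ring_scope.

(* Pointwise, (1 - eps) U_{alpha,0}(p,y) <= U_{alpha,eps}(p,y): the smoothing
   removes at most a fraction eps of the mass at y and only adds mass
   elsewhere.  Since ln is monotone, each term q x ln (q x / r x) of the
   divergence grows by at most - q x ln (1 - eps) when r = U_{alpha,eps}(p,y)
   is replaced by U_{alpha,0}(p,y), and these increments sum to
   - ln (1 - eps) = ln (1 / (1 - eps)) because q has total mass 1 on its
   support. *)

Lemma sum_support_ge0 (R : realType) (N : nat) (q : 'I_N -> R) :
  (forall x, 0 <= q x) -> \sum_(x < N | 0 < q x) q x = \sum_(x < N) q x.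
Proof.
move=> q_ge0; rewrite [RHS](bigID (fun x => 0 < q x)) /=.
rewrite [X in _ = _ + X]big1 ?addr0 // => x; rewrite -leNgt => q_le0.
by apply/eqP; rewrite eq_le q_le0 q_ge0.
Qed.

Lemma KL_le_scaled (R : realType) (N : nat) (c : R) (q r s : 'I_N -> R) :
  0 < c -> is_distr q -> (forall x, 0 < r x) ->
  (forall x, c * r x <= s x) ->
  KL q s <= KL q r - ln c.
Proof.
move=> c_gt0 [q_ge0 q_sum1] r_gt0 crs.
have -> : KL q r - ln c = \sum_(x < N | 0 < q x) q x * ln (q x / (c * r x)).
  rewrite -[ln c]mul1r -q_sum1 -sum_support_ge0 // mulr_suml -sumrB.
  apply: eq_bigr => x q_gt0; rewrite -mulrBr (mulrC c) invfM mulrA.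
  by rewrite [ln (_ / c)]lnM ?lnV ?posrE ?divr_gt0 ?invr_gt0.
rewrite /KL; apply: ler_sum => x q_gt0; rewrite ler_pM2l //.
have cr_gt0 : 0 < c * r x by rewrite mulr_gt0.
have s_gt0 : 0 < s x by apply: lt_le_trans (crs x).
rewrite ler_ln ?posrE ?divr_gt0 //.
by rewrite ler_pM2l // lef_pV2 ?posrE.
Qed.

Lemma update0_gt0 (R : realType) (N : nat) (alpha : R) (p : 'I_N -> R)
    (y : 'I_N) :
  0 < alpha -> alpha <= 1 -> (forall x, 0 < p x) ->
  forall x, 0 < update alpha 0 p y x.
Proof.
move=> alpha_gt0 alpha_le1 p_gt0 x; have := mulr_gt0 alpha_gt0 (p_gt0 x).
by rewrite /update; case: ifP => _; rewrite ?subr0 ?mulr1 ?mul0r ?mulr0; lra.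
Qed.

Lemma update_ge_scaled_update0 (R : realType) (N : nat) (alpha eps : R)
    (p : 'I_N -> R) (y : 'I_N) :
  (0 < N)%N -> 0 <= alpha <= 1 -> 0 <= eps -> (forall x, 0 <= p x) ->
  forall x, (1 - eps) * update alpha 0 p y x <= update alpha eps p y x.
Proof.
move=> N_gt0 /andP[alpha_ge0 alpha_le1] eps_ge0 p_ge0 x.
have N1_ge0 : 0 <= (N%:R : R) - 1 by rewrite subr_ge0 ler1n.
have mass_ge0 : 0 <= (1 - alpha) * (eps / (N%:R - 1)).
  by rewrite mulr_ge0 ?divr_ge0 // subr_ge0.
have := mulr_ge0 eps_ge0 (mulr_ge0 alpha_ge0 (p_ge0 x)).
by rewrite /update; case: ifP => _; rewrite ?mul0r ?subr0 ?mulr0 ?addr0; nra.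
Qed.

Theorem lemma1 (R : realType) (N : nat) (alpha eps : R) (p q : 'I_N -> R)
  (y : 'I_N) :
  (2 <= N)%N ->
  0 < alpha -> alpha < 1 ->
  0 <= eps -> eps <= 1 - 1 / N%:R ->
  is_distr p -> is_distr q ->
  (forall x, 0 < p x) ->
  KL q (update alpha 0 p y) >=
    KL q (update alpha eps p y) - ln (1 / (1 - eps)).
Proof.
move=> N_ge2 alpha_gt0 alpha_lt1 eps_ge0 eps_le _ q_distr p_gt0.
have N_gt0 : (0 < N)%N by apply: leq_trans N_ge2.
have eps_lt1 : 0 < 1 - eps.
  have : 0 < 1 / (N%:R : R) by rewrite divr_gt0 // ltr0n.
  lra.
rewrite div1r lnV ?posrE // opprK -lerBrDr.
apply: KL_le_scaled => //.
- by apply: update0_gt0 => //; apply: ltW.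
- apply: update_ge_scaled_update0 => //; first by rewrite !ltW.
  by move=> x; apply: ltW.
Qed.
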